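(* Let $\mathcal{A}$ and $\mathcal{B}$ be configurations of $d$ doors such that $\mathcal{A}$ dominates $\mathcal{B}$. Then for every knock sequence $\pi$, $\mathbb{T}_{\mathcal{A}}(\pi)\le\mathbb{T}_{\mathcal{B}}(\pi)$.
   Context: Dependent doors model. Fix an integer $d\ge 2$ and doors $1,\dots,d$, all initially closed; once a door opens it stays open forever. A configuration $\mathcal{C}$ specifies for each door $i$ a function $\phi_i^{\mathcal{C}}$ mapping every finite nonempty sequence $(X_1,\dots,X_n)$ of subsets of $\{1,\dots,i-1\}$ to $[0,1]$: $\phi_i^{\mathcal{C}}(X_1,\dots,X_n)$ is the probability that door $i$ has opened during $n$ knocks on it, where $X_j$ is the set of open doors among $\{1,\dots,i-1\}$ at the time of the $j$-th knock on door $i$ (so a closed door $i$ opens at its $n$-th knock with conditional probability $(\phi_i(X_1..X_n)-\phi_i(X_1..X_{n-1}))/(1-\phi_i(X_1..X_{n-1}))$, with $\phi_i$ of the empty sequence equal to $0$). Configurations are assumed monotone ($\phi_i(X')\le\phi_i(X)$ whenever $X'$ is a, not necessarily consecutive, subsequence of $X$) and positively correlated ($\phi_i(X'_1,\dots,X'_n)\le\phi_i(X_1,\dots,X_n)$ whenever $X'_j\subseteq X_j$ for all $j$). Configuration $\mathcal{A}$ dominates configuration $\mathcal{B}$ if $\phi_i^{\mathcal{A}}(X)\ge\phi_i^{\mathcal{B}}(X)$ for every door $i$ and every finite nonempty sequence $X$ of subsets of $\{1,\dots,i-1\}$. A knock sequence $\pi$ is an infinite sequence of door indices, executed in order without any feedback;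 $\mathbb{T}_{\mathcal{C}}(\pi)$ is the expected number of knocks until all $d$ doors are open. *)

From HB Require Import structures.
From mathcomp Require Import all_boot all_order all_algebra.
From mathcomp Require Import reals.
From mathcomp Require Import ereal sequences.
Set Implicit Arguments. Unset Strict Implicit. Unset Printing Implicit Defensive.
Import Order.TTheory GRing.Theory Num.Theory.
Local Open Scope ring_scope.

Section DoorsDefs.
Variables (R : realType) (d : nat).

(** Doors are 'I_d (door k of the paper is the ordinal k-1).
    A configuration is phi : 'I_d -> seq {set 'I_d} -> R; phi i X is
    meaningful only for nonempty X whose entries are subsets of the
    doors below i. *)

Definition lowset (i : 'I_d) : {set 'I_d} := [set j : 'I_d | (j < i)%N].

Definition valid_seq (i : 'I_d) (X : seq {set 'I_d}) : bool :=
  all (fun x : {set 'I_d} => x \subset lowset i) X.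

Definition config_vals (phi : 'I_d -> seq {set 'I_d} -> R) : Prop :=
  forall i X, valid_seq i X -> X != [::] -> 0 <= phi i X <= 1.

Definition monotone_config (phi : 'I_d -> seq {set 'I_d} -> R) : Prop :=
  forall i X X', valid_seq i X -> valid_seq i X' -> X' != [::] ->
    subseq X' X -> phi i X' <= phi i X.

Definition pos_correlated (phi : 'I_d -> seq {set 'I_d} -> R) : Prop :=
  forall i X X', valid_seq i X -> valid_seq i X' -> X' != [::] ->
    size X' = size X -> all2 (fun a b : {set 'I_d} => a \subset b) X' X ->
    phi i X' <= phi i X.

Definition dominates (phiA phiB : 'I_d -> seq {set 'I_d} -> R) : Prop :=
  forall i X, valid_seq i X -> X != [::] -> phiB i X <= phiA i X.

Definition phiE (phi : 'I_d -> seq {set 'I_d} -> R) i (X : seq {set 'I_d}) : R :=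
  if X is [::] then 0 else phi i X.

(** Given a forward trajectory t = [:: s_0; ...; s_n] of sets of open doors
    (s_j = open doors just before knock j, i.e. after j knocks), the sequence
    of sets of open lower doors at the knocks on door i among knocks 0..m-1. *)
Definition hist (pi : nat -> 'I_d) (t : seq {set 'I_d}) (i : 'I_d) (m : nat)
  : seq {set 'I_d} :=
  [seq nth set0 t j :&: lowset i | j <- iota 0 m & pi j == i].

Definition trans (phi : 'I_d -> seq {set 'I_d} -> R) (pi : nat -> 'I_d)
  (t : seq {set 'I_d}) (s' : {set 'I_d}) : R :=
  let n := (size t).-1 in
  let i := pi n in
  let s := last set0 t in
  if i \in s then (s' == s)%:R else
  let Xp := phiE phi i (hist pi t i n) in
  let Xc := phiE phi i (hist pi t i n.+1) in
  let q := (Xc - Xp) / (1 - Xp) in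
  if s' == i |: s then q else if s' == s then 1 - q else 0.

(** Probability of a reversed trajectory r = [:: s_n; ...; s_0]. *)
Fixpoint rprob (phi : 'I_d -> seq {set 'I_d} -> R) (pi : nat -> 'I_d)
  (r : seq {set 'I_d}) : R :=
  match r with
  | [::] => 0
  | s :: r' =>
      match r' with
      | [::] => (s == set0)%:R
      | _ :: _ => rprob phi pi r' * trans phi pi (rev r') s
      end
  end.

Definition P_notdone (phi : 'I_d -> seq {set 'I_d} -> R) (pi : nat -> 'I_d)
  (n : nat) : R :=
  \sum_(r : (n.+1).-tuple {set 'I_d})
     (head set0 r != [set: 'I_d])%:R * rprob phi pi r.

(** Expected number of knocks until all doors are open:
    E[T] = sum_{n>=0} P(T > n), as an extended real (possibly +oo). *)
Definition ET (phi : 'I_d -> seq {set 'I_d} -> R) (pi : nat -> 'I_d) : \bar R :=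
  (\sum_(n <oo) (P_notdone phi pi n)%:E)%E.

End DoorsDefs.

From HB Require Import structures.
From mathcomp Require Import all_boot all_order all_algebra.
From mathcomp Require Import reals.
From mathcomp Require Import ereal sequences.
Import Order.TTheory GRing.Theory Num.Theory.
Local Open Scope ring_scope.
Set Implicit Arguments. Unset Strict Implicit. Unset Printing Implicit Defensive.

(* Encode a run of n knocks by the opening times of the doors.  Its probability
   is a product over the doors of the conditional law of each door's opening
   time given the opening times of the lower doors, so P(T > n) can be computed
   door by door, from the top door down.  If the lower doors opened no later
   under A than under B, positive correlation of B and domination make the
   distribution function of the next door's opening time under A pointwise
   larger than under B, while the conditional probability of not being done is
   nondecreasing in that opening time (the same induction, applied to B alone);
   Abel summation then compares the two conditional expectations.  Summing
   P(T > n) over n compares the expected times. *)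

Section AbelSummation.
Variable R : numDomainType.
Implicit Types (w h : nat -> R) (m : nat).

Lemma abel_sum_le w h m :
  (forall k, (k <= m)%N -> 0 <= \sum_(t < k) w t) ->
  (forall k, (k.+1 < m)%N -> h k <= h k.+1) ->
  \sum_(t < m) w t * h t <= (\sum_(t < m) w t) * h m.-1.
Proof.
elim: m => [|m IH] w_ge0 h_incr; first by rewrite !big_ord0 mul0r.
rewrite !big_ord_recr /= mulrDl lerD2r.
apply: le_trans (IH _ _) _ => [k hk|k hk|]; [exact/w_ge0/leqW | exact/h_incr/leqW |].
case: m {IH} w_ge0 h_incr => [|m] w_ge0 h_incr; first by rewrite big_ord0 !mul0r.
by apply: ler_wpM2l; [exact: w_ge0 | exact: h_incr].
Qed.

Lemma ler_sum_mul_stochastic w1 w2 h m :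
  (forall k, (k <= m)%N -> \sum_(t < k) w2 t <= \sum_(t < k) w1 t) ->
  \sum_(t < m) w1 t = \sum_(t < m) w2 t ->
  (forall k, (k.+1 < m)%N -> h k <= h k.+1) ->
  \sum_(t < m) w1 t * h t <= \sum_(t < m) w2 t * h t.
Proof.
move=> cdf_le sum_eq h_incr; rewrite -subr_le0 -sumrB.
under eq_bigr do rewrite -mulrBl.
apply: le_trans (abel_sum_le (w := fun t => w1 t - w2 t) _ h_incr) _.
  by move=> k hk; rewrite sumrB subr_ge0 cdf_le.
by rewrite sumrB sum_eq subrr mul0r.
Qed.

End AbelSummation.

Lemma mul_sub1_ratio (R : numFieldType) (x y : R) : x <= y <= 1 ->
  (1 - x) * ((y - x) / (1 - x)) = y - x.
Proof.
case/andP=> xy y1; have [x1|x1] := eqVneq x 1.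
  have y1' : y = 1 by apply: le_anti; rewrite y1 -x1 xy.
  by rewrite x1 y1' subrr mul0r.
by rewrite mulrC divfK // subr_eq0 eq_sym.
Qed.

Lemma head_rev (T : Type) (x : T) s : head x (rev s) = last x s.
Proof. by case/lastP: s => //= s y; rewrite rev_rcons last_rcons. Qed.

Section Doors.
Variables (R : realType) (d : nat) (pi : nat -> 'I_d).
Implicit Types (phi : 'I_d -> seq {set 'I_d} -> R) (tau : 'I_d -> nat)
  (i k : 'I_d) (m n : nat).

(* A run of knocks is encoded by opening times: door k opens at knock number
   [tau k] (counting from 0), so [opened tau m] is the set of open doors after
   m knocks, and [tau k >= n] means that door k is still closed after n knocks.
   [door_weight phi n tau i] is the conditional probability, within the first
   n knocks, that door i opens at time [tau i] given the opening times of the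
   lower doors. *)
Definition opened tau m : {set 'I_d} := [set k | (tau k < m)%N].

Definition knock_hist tau i m : seq {set 'I_d} :=
  [seq opened tau j :&: lowset i | j <- iota 0 m & pi j == i].

Definition door_weight phi n tau i : R :=
  if (tau i < n)%N then
    phiE phi i (knock_hist tau i (tau i).+1) - phiE phi i (knock_hist tau i (tau i))
  else 1 - phiE phi i (knock_hist tau i n).

Definition traj n tau : seq {set 'I_d} := [seq opened tau j | j <- iota 0 n.+1].

Lemma knock_hist_valid tau i m : valid_seq i (knock_hist tau i m).
Proof. by apply/allP => x /mapP [j _ ->]; apply: subsetIr. Qed.

Lemma knock_histS tau i m : knock_hist tau i m.+1 =
  knock_hist tau i m ++ (if pi m == i then [:: opened tau m :&: lowset i] else [::]).
Proof. by rewrite /knock_hist -addn1 iotaD filter_cat map_cat /=; case: (pi m == i). Qed.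

Lemma knock_hist_unknocked tau i m : pi m != i -> knock_hist tau i m.+1 = knock_hist tau i m.
Proof. by move=> /negbTE pi_m; rewrite knock_histS pi_m cats0. Qed.

Lemma eq_knock_hist tau tau' i m : (forall k, (k < i)%N -> tau k = tau' k) ->
  knock_hist tau i m = knock_hist tau' i m.
Proof.
move=> eq_low; apply/eq_in_map => j _; apply/setP => k; rewrite !inE.
by case: (ltnP k i) => hk; rewrite ?andbF // eq_low.
Qed.

Lemma knock_hist_subseq tau i m m' : (m <= m')%N ->
  subseq (knock_hist tau i m) (knock_hist tau i m').
Proof. by move=> /subnKC <-; rewrite /knock_hist iotaD filter_cat map_cat prefix_subseq. Qed.

Lemma eq_door_weight phi n tau tau' i : (forall k, (k <= i)%N -> tau k = tau' k) ->
  door_weight phi n tau i = door_weight phi n tau' i.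
Proof.
move=> eq_le; have eq_hist m : knock_hist tau i m = knock_hist tau' i m.
  by apply: eq_knock_hist => k /ltnW; apply: eq_le.
by rewrite /door_weight !eq_hist eq_le.
Qed.

Lemma door_weight_upd phi n tau i t :
  door_weight phi n [eta tau with i |-> t] i =
  if (t < n)%N then phiE phi i (knock_hist tau i t.+1) - phiE phi i (knock_hist tau i t)
  else 1 - phiE phi i (knock_hist tau i n).
Proof.
have eq_hist m : knock_hist [eta tau with i |-> t] i m = knock_hist tau i m.
  by apply: eq_knock_hist => k /= hk; rewrite ifN // -val_eqE neq_ltn hk.
by rewrite /door_weight !eq_hist /= eqxx.
Qed.

Lemma door_weight_cdf phi n tau i m : (m <= n)%N ->
  \sum_(t < m.+1) door_weight phi n [eta tau with i |-> (t : nat)] i =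
  if (m < n)%N then phiE phi i (knock_hist tau i m.+1) else 1.
Proof.
elim: m => [|m IH] hm.
  by rewrite big_ord1 door_weight_upd /= subr0; case: n hm => [|n] _ //=; rewrite subr0.
rewrite big_ord_recr IH ?(ltnW hm) // hm door_weight_upd /=.
case: ifP => [_|/negbT]; first by rewrite addrC subrK.
by rewrite -leqNgt => nm; rewrite (@anti_leq n m.+1) ?hm ?nm // addrC subrK.
Qed.

Lemma size_traj n tau : size (traj n tau) = n.+1.
Proof. by rewrite size_map size_iota. Qed.

Lemma nth_traj n tau j : (j <= n)%N -> nth set0 (traj n tau) j = opened tau j.
Proof. by move=> hj; rewrite (nth_map 0%N) ?size_iota ?nth_iota. Qed.

Lemma last_traj n tau : last set0 (traj n tau) = opened tau n.
Proof. by rewrite -nth_last size_traj nth_traj. Qed.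

Lemma trajS n tau : traj n.+1 tau = rcons (traj n tau) (opened tau n.+1).
Proof. by rewrite /traj -(addn1 n.+1) iotaD map_cat cats1. Qed.

Lemma hist_traj n tau i m : (m <= n.+1)%N -> hist pi (traj n tau) i m = knock_hist tau i m.
Proof.
move=> hm; apply/eq_in_map => j; rewrite mem_filter mem_iota => /andP[_ /andP[_ hj]].
by rewrite nth_traj // -ltnS (leq_trans hj hm).
Qed.

Lemma eq_traj n tau tau' : tau =1 tau' -> traj n tau = traj n tau'.
Proof. by move=> eq_tau; apply/eq_map => j; apply/setP => k; rewrite !inE eq_tau. Qed.

Lemma traj_inj n tau tau' : (forall k, tau k <= n)%N -> (forall k, tau' k <= n)%N ->
  traj n tau = traj n tau' -> tau =1 tau'.
Proof.
move=> tau_le tau'_le eq_tr k.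
have open_at t : (t <= n)%N -> (tau k < t)%N = (tau' k < t)%N.
  by move=> tn; have := congr1 (fun s => k \in nth set0 s t) eq_tr; rewrite !nth_traj // !inE.
case: (ltngtP (tau k) (tau' k)) => // lt_tau.
  by have := open_at _ (tau'_le k); rewrite lt_tau ltnn.
by have := open_at _ (tau_le k); rewrite lt_tau ltnn.
Qed.

Lemma rprob_cons phi s r : r != [::] ->
  rprob phi pi (s :: r) = rprob phi pi r * trans phi pi (rev r) s.
Proof. by case: r. Qed.

Lemma trans_subset phi t s' : trans phi pi t s' != 0 -> last set0 t \subset s'.
Proof.
rewrite /trans /=; set s := last set0 t; case: ifP => _.
  by case: (eqVneq s' s) => [-> _ | _]; rewrite ?subxx //= eqxx.
case: (eqVneq s' (pi (size t).-1 |: s)) => [-> _ | _]; first exact: subsetUr.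
by case: (eqVneq s' s) => [-> _ | _]; rewrite ?subxx ?eqxx.
Qed.

Lemma rprob_neq0_traj phi n r : rprob phi pi r != 0 -> size r = n.+1 ->
  exists2 tau, (forall k, tau k <= n)%N & r = rev (traj n tau).
Proof.
elim: n r => [|n IH] [|s r] //.
  case: r => //= + _; rewrite pnatr_eq0 eqb0 negbK => /eqP ->.
  by exists (fun=> 0%N).
move=> rprob_neq0 [size_r]; have r_neq0 : r != [::] by rewrite -size_eq0 size_r.
move: rprob_neq0; rewrite rprob_cons // mulf_eq0 negb_or => /andP[+ trans_neq0].
move=> /IH /(_ size_r) [tau' tau'_le r_eq]; move: trans_neq0.
rewrite r_eq revK => /trans_subset; rewrite last_traj => sub_s.
pose tau k := if k \in s then minn (tau' k) n else n.+1.
have tau'_ge k : k \notin s -> (n <= tau' k)%N.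
  by apply: contraNT; rewrite -ltnNge => lt_n; apply: (subsetP sub_s); rewrite inE.
exists tau => [k|]; first by rewrite /tau; case: ifP => // _; rewrite (leq_trans (geq_minr _ _)).
rewrite trajS rev_rcons; congr (_ :: rev _).
  by apply/setP => k; rewrite inE /tau; case: ifP; rewrite ?ltnn // ltnS geq_minr.
apply/eq_in_map => j; rewrite mem_iota add0n ltnS => /andP[_ le_j].
apply/setP => k; rewrite !inE /tau; case: ifP => [_|/negbT/tau'_ge le_tau'].
  by rewrite gtn_min (leq_gtF le_j) orbF.
by rewrite !leq_gtF ?(leqW le_j) ?(leq_trans le_j).
Qed.

Lemma door_weight_unknocked phi n tau k : pi n != k -> tau k != n ->
  door_weight phi n.+1 tau k = door_weight phi n tau k.
Proof.
move=> pi_n tau_k; rewrite /door_weight ltnS leq_eqVlt (negbTE tau_k) /=.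
by case: ltnP => // _; rewrite knock_hist_unknocked.
Qed.

Lemma door_weight_opens_unknocked phi n tau k : pi n != k -> tau k = n ->
  door_weight phi n.+1 tau k = 0.
Proof. by move=> pi_n tau_k; rewrite /door_weight tau_k ltnSn knock_hist_unknocked ?subrr. Qed.

Lemma trans_traj_eq0 phi n tau k : k != pi n -> tau k = n ->
  trans phi pi (traj n tau) (opened tau n.+1) = 0.
Proof.
move=> k_ne tau_k; rewrite /trans size_traj last_traj /=.
have k_new : k \in opened tau n.+1 by rewrite inE tau_k.
have k_old : k \notin opened tau n by rewrite inE tau_k ltnn.
have -> : (opened tau n.+1 == opened tau n) = false.
  by apply/negbTE; apply: contraNneq k_old => <-.
have -> : (opened tau n.+1 == pi n |: opened tau n) = false.
  by apply/negbTE; apply: contraNneq k_old => new_eq; move: k_new; rewrite new_eq !inE (negbTE k_ne).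
by case: ifP.
Qed.

Section ValidConfig.
Variable phi : 'I_d -> seq {set 'I_d} -> R.
Hypotheses (phi_vals : config_vals phi) (phi_mono : monotone_config phi).

Lemma phiE_hist_bounds tau i m : 0 <= phiE phi i (knock_hist tau i m) <= 1.
Proof.
rewrite /phiE; case E: (knock_hist tau i m) => [|x s]; first by rewrite lexx ler01.
by apply: phi_vals => //; rewrite -E knock_hist_valid.
Qed.

Lemma phiE_hist_mono tau i m m' : (m <= m')%N ->
  phiE phi i (knock_hist tau i m) <= phiE phi i (knock_hist tau i m').
Proof.
move=> le_m; have sub := knock_hist_subseq tau i le_m.
have [/andP[ge0 _] _] := (phiE_hist_bounds tau i m', knock_hist_valid tau i m').
rewrite {1}/phiE; case E: (knock_hist tau i m) => [//|x s].
rewrite -E /phiE; case E': (knock_hist tau i m') => [|y t].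
  by move: sub; rewrite E E' subseq0.
by rewrite -E'; apply: phi_mono => //; rewrite ?knock_hist_valid ?E.
Qed.

Lemma door_weight_ge0 n tau i : 0 <= door_weight phi n tau i.
Proof.
rewrite /door_weight; case: ifP => _; rewrite subr_ge0; first exact: phiE_hist_mono.
by case/andP: (phiE_hist_bounds tau i n).
Qed.

Lemma door_weight_knocked n tau : (forall k, k != pi n -> tau k != n) ->
  door_weight phi n.+1 tau (pi n) =
  door_weight phi n tau (pi n) * trans phi pi (traj n tau) (opened tau n.+1).
Proof.
move=> no_other; set i := pi n.
have opened_next : opened tau n.+1 = if tau i == n then i |: opened tau n else opened tau n.
  apply/setP => k; rewrite !inE ltnS leq_eqVlt.
  have [->|k_ne] := eqVneq k i; first by case: (tau i == n); rewrite !inE ?eqxx.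
  by rewrite (negbTE (no_other k k_ne)); case: ifP; rewrite !inE ?(negbTE k_ne).
have /andP[_ Xc_le1] := phiE_hist_bounds tau i n.+1.
have Xp_le_Xc := phiE_hist_mono tau i (leqnSn n).
rewrite /trans size_traj last_traj !hist_traj //= -/i opened_next /door_weight ltnS.
case: (ltngtP (tau i) n) => tau_i.
- by rewrite inE tau_i eqxx mulr1.
- have i_closed : i \notin opened tau n by rewrite inE ltnNge (ltnW tau_i).
  have -> : (opened tau n == i |: opened tau n) = false.
    by apply/negbTE; apply: contraNneq i_closed => ->; rewrite !inE eqxx.
  rewrite (negbTE i_closed) eqxx mulrBr mulr1 mul_sub1_ratio ?Xp_le_Xc //.
  by rewrite opprB addrA subrK.
- have i_closed : i \notin opened tau n by rewrite inE tau_i ltnn.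
  by rewrite (negbTE i_closed) eqxx tau_i mul_sub1_ratio ?Xp_le_Xc.
Qed.

Lemma rprob_traj n tau : rprob phi pi (rev (traj n tau)) = \prod_k door_weight phi n tau k.
Proof.
elim: n => [|n IH].
  have -> : rev (traj 0 tau) = [:: set0].
    by rewrite /traj /rev /=; congr [:: _]; apply/setP => k; rewrite !inE.
  by rewrite /= eqxx; apply/esym/big1 => k _; rewrite /door_weight ltn0 /= subr0.
rewrite trajS rev_rcons rprob_cons ?revK ?IH; last by rewrite -size_eq0 size_rev size_traj.
case: (pickP (fun k => (k != pi n) && (tau k == n))) => [k /andP[k_ne /eqP tau_k]|no_other].
  rewrite (trans_traj_eq0 _ k_ne tau_k) mulr0 (bigD1 k) //=.
  by rewrite door_weight_opens_unknocked ?mul0r // eq_sym.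
have {}no_other k : k != pi n -> tau k != n by move=> k_ne; have := no_other k; rewrite /= k_ne => /negbT.
rewrite (bigD1 (pi n)) //= [RHS](bigD1 (pi n)) //= door_weight_knocked // mulrAC.
congr (_ * _); apply: eq_bigr => k k_ne.
by apply/esym/door_weight_unknocked; [rewrite eq_sym | exact: no_other].
Qed.

End ValidConfig.

Lemma phiE_hist_le (phiA phiB : 'I_d -> seq {set 'I_d} -> R) tau tau' i m :
  pos_correlated phiB -> dominates phiA phiB -> (forall k, tau k <= tau' k)%N ->
  phiE phiB i (knock_hist tau' i m) <= phiE phiA i (knock_hist tau i m).
Proof.
move=> B_pc AB le_tau.
have size_eq : size (knock_hist tau' i m) = size (knock_hist tau i m) by rewrite !size_map.
have hist_sub : all2 (fun a b : {set 'I_d} => a \subset b) (knock_hist tau' i m) (knock_hist tau i m).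
  rewrite all2E size_eq eqxx zip_map all_map; apply/allP => j _ /=.
  by apply/setSI/subsetP => k; rewrite !inE => /(leq_ltn_trans (le_tau k)).
rewrite /phiE; case E: (knock_hist tau i m) size_eq hist_sub => [|x s];
  case E': (knock_hist tau' i m) => [|x' s'] //.
rewrite -E -E' => size_eq hist_sub; apply: (@le_trans _ _ (phiB i (knock_hist tau i m))).
  by apply: B_pc => //; rewrite ?knock_hist_valid ?E'.
by apply: AB => //; rewrite ?knock_hist_valid ?E.
Qed.

Section Horizon.
Variable n : nat.
Local Notation times := {ffun 'I_d -> 'I_n.+1}.
Implicit Types (x y : times).

Definition ftimes x : 'I_d -> nat := fun k => x k.

Definition unfinished x : bool := [exists k, n <= x k]%N.

Lemma size_rev_traj tau : size (rev (traj n tau)) == n.+1.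
Proof. by rewrite size_rev size_traj. Qed.

Definition rtraj x : (n.+1).-tuple {set 'I_d} := Tuple (size_rev_traj (ftimes x)).

Lemma rtraj_inj : injective rtraj.
Proof.
move=> x y /(congr1 val) /(congr1 rev); rewrite !revK => eq_tr.
by apply/ffunP => k; apply/val_inj/(traj_inj _ _ eq_tr) => j; rewrite -ltnS ltn_ord.
Qed.

Lemma unfinishedE x : (opened (ftimes x) n != [set: 'I_d]) = unfinished x.
Proof.
rewrite /ftimes; apply/idP/idP => [S_neq | /existsP [k le_k]].
  by apply: contraNT S_neq => /existsPn lt_all; apply/eqP/setP => k; rewrite !inE ltnNge lt_all.
by apply/eqP => /setP /(_ k); rewrite !inE ltnNge le_k.
Qed.

Lemma P_notdoneE phi : config_vals phi -> monotone_config phi ->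
  P_notdone phi pi n = \sum_x (unfinished x)%:R * \prod_k door_weight phi n (ftimes x) k.
Proof.
move=> phi_vals phi_mono; rewrite /P_notdone (bigID [in [set rtraj x | x in times]]) /=.
have -> : \sum_(r | r \notin [set rtraj x | x in times])
    (head set0 r != [set: 'I_d])%:R * rprob phi pi r = 0.
  apply: big1 => r r_out; apply/eqP; rewrite mulf_eq0; apply/orP; right.
  apply: contraNT r_out => /rprob_neq0_traj /(_ (size_tuple r)) [tau tau_le r_eq].
  apply/imsetP; exists [ffun k => inord (tau k)] => //.
  apply/val_inj; rewrite /= r_eq; congr rev; apply: eq_traj => k.
  by rewrite /ftimes ffunE inordK // ltnS.
rewrite addr0 big_imset /= => [|x y _ _ /rtraj_inj //].
by apply: eq_bigr => x _; rewrite rprob_traj // head_rev last_traj unfinishedE.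
Qed.

Definition agree (i : nat) y x : bool := [forall k : 'I_d, (k < i)%N ==> (x k == y k)].

Definition upd y k (t : 'I_n.+1) : times := finfun [eta y with k |-> t].

(* The probability of not being done after n knocks, conditionally on the doors
   below i opening at the times y. *)
Definition cond_notdone phi (i : nat) y : R :=
  \sum_(x | agree i y x)
     (\prod_(k : 'I_d | (i <= k)%N) door_weight phi n (ftimes x) k) * (unfinished x)%:R.

Lemma cond_notdone0 phi y :
  cond_notdone phi 0 y = \sum_x (unfinished x)%:R * \prod_k door_weight phi n (ftimes x) k.
Proof. by apply: eq_big => [x|x _]; [apply/forallP | rewrite mulrC]. Qed.

Lemma cond_notdone_top phi y : cond_notdone phi d y = (unfinished y)%:R.
Proof.
rewrite /cond_notdone (big_pred1 y) => [|x]; last first.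
  apply/forallP/eqP => [agr|-> k]; last by rewrite eqxx implybT.
  by apply/ffunP => k; apply/eqP; have := agr k; rewrite ltn_ord.
by rewrite big_pred0 ?mul1r // => k; rewrite leqNgt ltn_ord.
Qed.

Lemma agreeS (i : nat) (lt_i : (i < d)%N) y x t :
  agree i.+1 (upd y (Ordinal lt_i) t) x = agree i y x && (x (Ordinal lt_i) == t).
Proof.
set io := Ordinal lt_i.
apply/forallP/andP => [agr | [/forallP agr /eqP x_io] k].
  split; last by have := agr io; rewrite ltnSn ffunE /= eqxx.
  apply/forallP => k; apply/implyP => lt_k; have := agr k.
  by rewrite ltnS (ltnW lt_k) ffunE /= ifN // -val_eqE /= neq_ltn lt_k.
rewrite ffunE /=; have [-> | k_ne] := eqVneq k io; first by rewrite x_io eqxx implybT.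
rewrite ltnS leq_eqVlt (_ : val k == i = false) //; last by apply/negbTE; rewrite -val_eqE in k_ne.
exact: agr.
Qed.

Lemma cond_notdoneS phi (i : nat) (lt_i : (i < d)%N) y :
  let io := Ordinal lt_i in
  cond_notdone phi i y = \sum_(t : 'I_n.+1)
    door_weight phi n (ftimes (upd y io t)) io * cond_notdone phi i.+1 (upd y io t).
Proof.
move=> io; rewrite /cond_notdone (partition_big (fun x => x io) xpredT) //=.
apply: eq_bigr => t _; rewrite mulr_sumr.
apply: eq_big => [x|x /andP[agr /eqP x_io]]; first by rewrite agreeS.
rewrite (bigD1 io) //= -!mulrA; congr (_ * (_ * _)).
  apply: eq_door_weight => k le_k; rewrite /ftimes ffunE /=.
  have [-> //|k_ne] := eqVneq k io; first by rewrite x_io.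
  have lt_k : (k < i)%N by rewrite ltn_neqAle le_k andbT.
  by have /implyP/(_ lt_k)/eqP-> := forallP agr k.
by apply: eq_bigl => k; rewrite ltn_neqAle andbC eq_sym -val_eqE.
Qed.

Lemma unfinished_mono y y' : (forall k, y k <= y' k)%N -> unfinished y -> unfinished y'.
Proof. by move=> le_y /existsP [k le_k]; apply/existsP; exists k; apply: leq_trans (le_y k). Qed.

Lemma upd_le y y' k t : (forall j, y j <= y' j)%N -> forall j, (upd y k t j <= upd y' k t j)%N.
Proof. by move=> le_y j; rewrite !ffunE /=; case: ifP. Qed.

Lemma door_weight_ftimes_upd phi y k (t : 'I_n.+1) :
  door_weight phi n (ftimes (upd y k t)) k = door_weight phi n [eta ftimes y with k |-> (t : nat)] k.
Proof. by apply: eq_door_weight => j _; rewrite /ftimes ffunE /=; case: ifP. Qed.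

Section Comparison.
Variable phiB : 'I_d -> seq {set 'I_d} -> R.
Hypotheses (B_vals : config_vals phiB) (B_mono : monotone_config phiB)
  (B_pc : pos_correlated phiB).

Lemma cond_notdone_le (i : nat) : (i <= d)%N ->
  forall phiA, config_vals phiA -> monotone_config phiA -> dominates phiA phiB ->
  forall y y', (forall k, y k <= y' k)%N -> cond_notdone phiA i y <= cond_notdone phiB i y'.
Proof.
move=> /subKn <-.
elim: (d - i)%N (leq_subr i d) => [|k IH] le_k phiA A_vals A_mono AB y y' le_y.
  rewrite subn0 !cond_notdone_top ler_nat.
  by case: (unfinished y) (unfinished_mono le_y) => // ->.
have lt_i : (d - k.+1 < d)%N by rewrite ltn_subrL (leq_trans _ le_k).
rewrite !(cond_notdoneS _ lt_i) subnSK //; set io := Ordinal lt_i.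
pose h t := cond_notdone phiB (d - k)%N (upd y' io (inord t)).
apply: (@le_trans _ _ (\sum_(t < n.+1) door_weight phiA n [eta ftimes y with io |-> (t : nat)] io * h t)).
  apply: ler_sum => t _; rewrite door_weight_ftimes_upd /h inord_val.
  apply: ler_wpM2l; first exact: door_weight_ge0.
  by apply: (IH (ltnW le_k)) => //; apply: upd_le.
under [X in _ <= X]eq_bigr => t _ do rewrite door_weight_ftimes_upd -[t in upd _ _ t]inord_val.
apply: (@ler_sum_mul_stochastic _ (fun t => door_weight phiA n [eta ftimes y with io |-> t] io)
  (fun t => door_weight phiB n [eta ftimes y' with io |-> t] io) h) => [[|m] le_m|| t lt_t].
- by rewrite !big_ord0.
- rewrite !door_weight_cdf //; case: ifP => // _.
  exact: phiE_hist_le.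
- by rewrite !door_weight_cdf // ltnn.
- (* the induction hypothesis for [phiA := phiB] makes [h] nondecreasing *)
  apply: (IH (ltnW le_k)) => // j.
  by rewrite !ffunE /=; case: ifP => // _; rewrite !inordK // ltnW.
Qed.

End Comparison.

End Horizon.

End Doors.

Theorem mainTheorem9 (R : realType) (d : nat) (hd : (2 <= d)%N)
  (phiA phiB : 'I_d -> seq {set 'I_d} -> R) :
  config_vals phiA -> monotone_config phiA -> pos_correlated phiA ->
  config_vals phiB -> monotone_config phiB -> pos_correlated phiB ->
  dominates phiA phiB ->
  forall pi : nat -> 'I_d, (ET phiA pi <= ET phiB pi)%E.
Proof.
move=> A_vals A_mono _ B_vals B_mono B_pc AB pi.
apply: lee_nneseries => [n _ _|n _]; rewrite lee_fin (P_notdoneE _ _ A_vals A_mono).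
  apply: sumr_ge0 => x _; rewrite mulr_ge0 ?ler0n ?prodr_ge0 // => k _.
  exact: door_weight_ge0.
rewrite (P_notdoneE _ _ B_vals B_mono) -!(cond_notdone0 pi _ [ffun=> ord0]).
exact: cond_notdone_le.
Qed.
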